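(* Let $f=a_0+a_1x+\cdots+a_nx^n\in\mathbb{Z}[x]$ be a primitive polynomial. Suppose that $a_0=\pm p^k d$ and $\gcd(a_0,a_1)=p^k$ for some positive integers $k$ and $d$ and a prime number $p$, where $p\nmid a_2 d$ and $k$ is odd, and that every zero $\theta\in\mathbb{C}$ of $f$ satisfies $|\theta|>d$. Then $f$ is irreducible in $\mathbb{Z}[x]$.
   Context: A polynomial $a_0+a_1x+\cdots+a_nx^n\in\mathbb{Z}[x]$ is primitive if $\gcd(a_0,a_1,\ldots,a_n)=1$. Coefficients $a_i$ with $i>n$ are taken to be $0$. *)

From mathcomp Require Import all_boot all_algebra all_field.
Set Implicit Arguments. Unset Strict Implicit. Unset Printing Implicit Defensive.
Import GRing.Theory Num.Theory.
Local Open Scope ring_scope.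

Definition primitive_Zpoly (f : {poly int}) : Prop :=
  \big[gcdz/0]_(i < size f) f`_i = 1.

Definition irreducible_in_Zx (f : {poly int}) : Prop :=
  f != 0 /\ f \isn't a GRing.unit /\
  forall g h : {poly int}, f = g * h -> g \is a GRing.unit \/ h \is a GRing.unit.

From mathcomp Require Import all_boot all_order all_algebra all_field.
Set Implicit Arguments. Unset Strict Implicit. Unset Printing Implicit Defensive.
Import Order.TTheory GRing.Theory Num.Theory.
Local Open Scope ring_scope.

(* Suppose f = g h with g, h non-units. Primitivity makes g and h non-constant,
   so the product formula for their constant terms and the bound on the roots
   give |g(0)|, |h(0)| > d. As g(0) h(0) = ±p^k d with p ∤ d, each of g(0), h(0)
   is divisible by p (a factor prime to p would divide d), and their p-adic
   valuations add up to the odd number k, so they differ, say i < j. Then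
   p ∤ a_2 = g0 h2 + g1 h1 + g2 h0 forces p ∤ h1, while p^(i+1) divides both
   p^k | a_1 = g0 h1 + g1 h0 and h0, hence g0 h1, whose valuation is i. *)

Lemma prodr_gt_of_gt (R : numDomainType) (I : eqType) (s : seq I) (F : I -> R) (r : R) :
  1 <= r -> s != [::] -> {in s, forall i, r < F i} -> r < \prod_(i <- s) F i.
Proof.
case: s => [//|i s] r_ge1 _ gt_F; rewrite big_cons.
have F_ge1 j : j \in s -> 1 <= F j.
  by move=> js; rewrite (le_trans r_ge1) // ltW // gt_F // inE js orbT.
have prod_ge1 : 1 <= \prod_(j <- s) F j.
  by rewrite big_seq; apply: (big_ind (fun x => 1 <= x)) => //; apply: mulr_ege1.
have Fi_gt := gt_F i (mem_head _ _).
apply: (lt_le_trans Fi_gt); rewrite ler_peMr //.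
by rewrite (le_trans ler01) // (le_trans r_ge1) ?ltW.
Qed.

Lemma norm_coef0_gt (C : numClosedFieldType) (P : {poly C}) (r : C) :
  1 <= r -> (1 < size P)%N -> 1 <= `|lead_coef P| ->
  (forall z, root P z -> r < `|z|) -> r < `|P`_0|.
Proof.
move=> r_ge1 P_gt1 lc_ge1 gt_roots.
have [s P_def] := closed_field_poly_normal P.
have lc_neq0 : lead_coef P != 0 by rewrite -normr_gt0 (lt_le_trans ltr01).
have s_neq0 : s != [::].
  apply: contraTneq P_gt1 => s0.
  by rewrite P_def s0 big_nil size_scale // size_poly1.
have gt_s : {in s, forall z, r < `|z|}.
  by move=> z zs; apply: gt_roots; rewrite P_def rootZ // root_prod_XsubC.
have -> : `|P`_0| = `|lead_coef P| * \prod_(z <- s) `|z|.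
  rewrite -horner_coef0 {1}P_def hornerZ horner_prod normrM normr_prod.
  by congr (_ * _); apply: eq_bigr => z _; rewrite hornerXsubC sub0r normrN.
apply: (lt_le_trans (prodr_gt_of_gt r_ge1 s_neq0 gt_s)).
by rewrite ler_peMl // prodr_ge0.
Qed.

Lemma coef0_gt_of_roots_gt (g : {poly int}) (d : nat) : (0 < d)%N -> (1 < size g)%N ->
  (forall theta : algC, root (map_poly intr g) theta -> d%:R < `|theta|) ->
  (d < `|(g`_0)%R|)%N.
Proof.
move=> d_gt0 g_gt1 gt_roots.
have g_neq0 : g != 0 by rewrite -size_poly_gt0 (ltn_trans _ g_gt1).
rewrite -(ltr_nat algC) natr_absz intr_norm -(coef_map intr).
apply: norm_coef0_gt => //; first by rewrite ler1n.
  by rewrite size_map_inj_poly //; apply: intr_inj.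
rewrite lead_coef_map_inj //; last exact: intr_inj.
by rewrite norm_intr_ge1 ?intr_int // intr_eq0 lead_coef_eq0.
Qed.

Lemma coef1M (R : nzSemiRingType) (p q : {poly R}) :
  (p * q)`_1 = p`_0 * q`_1 + p`_1 * q`_0.
Proof. by rewrite coefM !big_ord_recr big_ord0 /= add0r. Qed.

Lemma coef2M (R : nzSemiRingType) (p q : {poly R}) :
  (p * q)`_2 = p`_0 * q`_2 + p`_1 * q`_1 + p`_2 * q`_0.
Proof. by rewrite coefM !big_ord_recr big_ord0 /= add0r. Qed.

Lemma prime_dvd_factor_gt (p k d b c : nat) : prime p -> (0 < d)%N ->
  (b * c = p ^ k * d)%N -> (d < b)%N -> (p %| b)%N.
Proof.
move=> p_pr d_gt0 bc d_lt_b; apply: contraLR d_lt_b => p_ndvd_b.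
have b_cop_pk : coprime b (p ^ k) by rewrite coprimeXr // coprime_sym prime_coprime.
by rewrite -leqNgt dvdn_leq // -(Gauss_dvdr _ b_cop_pk) -bc dvdn_mulr.
Qed.

Lemma lognD_factors (p k d b c : nat) : prime p -> (0 < d)%N -> ~~ (p %| d)%N ->
  (b * c = p ^ k * d)%N -> (logn p b + logn p c = k)%N.
Proof.
move=> p_pr d_gt0 p_ndvd_d bc.
have /andP[b_gt0 c_gt0] : (0 < b)%N && (0 < c)%N.
  by rewrite -muln_gt0 bc muln_gt0 expn_gt0 prime_gt0.
have pk_gt0 : (0 < p ^ k)%N by rewrite expn_gt0 prime_gt0.
rewrite -lognM // bc lognM // pfactorK //.
by rewrite logn_coprime ?prime_coprime // addn0.
Qed.

Lemma coef0_factors_not_both_gt (p k d : nat) (g h : {poly int}) :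
  prime p -> odd k -> (0 < d)%N -> ~~ (p %| d)%N ->
  `|((g * h)`_0)%R|%N = (p ^ k * d)%N ->
  ((p ^ k)%:Z %| (g * h)`_1)%Z -> ~~ (p%:Z %| (g * h)`_2)%Z ->
  (d < `|(g`_0)%R|)%N -> (d < `|(h`_0)%R|)%N -> False.
Proof.
move=> p_pr k_odd d_gt0 p_ndvd_d.
have factors0 (u v : {poly int}) : `|((u * v)`_0)%R|%N = (p ^ k * d)%N ->
    (`|(u`_0)%R| * `|(v`_0)%R|)%N = (p ^ k * d)%N.
  by rewrite coef0M abszM.
wlog lt_gh : g h / (logn p `|(g`_0)%R| < logn p `|(h`_0)%R|)%N.
  move=> gh_case f0 f1 f2 g_gt h_gt.
  have logn_sum := lognD_factors p_pr d_gt0 p_ndvd_d (factors0 _ _ f0).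
  case: (ltngtP (logn p `|(g`_0)%R|) (logn p `|(h`_0)%R|)) => [lt|gt|eq].
  - by apply: (gh_case g h).
  - by apply: (gh_case h g) => //; rewrite mulrC.
  - by move: k_odd; rewrite -logn_sum eq addnn odd_double.
move=> /factors0 g0h0 pk_f1 p_f2 g_gt h_gt.
set i := logn p `|(g`_0)%R| in lt_gh.
have p_g0 : (p%:Z %| g`_0)%Z := prime_dvd_factor_gt p_pr d_gt0 g0h0 g_gt.
have p_h0 : (p%:Z %| h`_0)%Z.
  by rewrite mulnC in g0h0; apply: prime_dvd_factor_gt p_pr d_gt0 g0h0 h_gt.
have p_ndvd_h1 : ~~ (p%:Z %| h`_1)%Z.
  apply: contra p_f2 => p_h1; rewrite coef2M !rpredD //.
  - exact: dvdz_mulr.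
  - exact: dvdz_mull.
  - exact: dvdz_mull.
have h1_gt0 : (0 < `|(h`_1)%R|)%N.
  by rewrite absz_gt0; apply: contraNneq p_ndvd_h1 => ->; apply: dvdz0.
have pi1_h0 : ((p ^ i.+1)%:Z %| h`_0)%Z.
  by rewrite dvdzE /= pfactor_dvdn // (leq_ltn_trans _ h_gt).
have pi1_pk : ((p ^ i.+1)%:Z %| (p ^ k)%:Z)%Z.
  rewrite dvdzE /= dvdn_exp2l // -(lognD_factors p_pr d_gt0 p_ndvd_d g0h0).
  exact: leq_trans lt_gh (leq_addl _ _).
have pi1_g0h1 : ((p ^ i.+1)%:Z %| g`_0 * h`_1)%Z.
  have -> : g`_0 * h`_1 = (g * h)`_1 - g`_1 * h`_0 by rewrite coef1M addrK.
  by rewrite rpredB ?dvdz_mull // (dvdz_trans pi1_pk).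
have g0_gt0 : (0 < `|(g`_0)%R|)%N by apply: leq_ltn_trans g_gt.
move: pi1_g0h1; rewrite dvdzE /= abszM pfactor_dvdn ?muln_gt0 ?g0_gt0 //.
have logn_h1 : logn p `|(h`_1)%R| = 0%N by rewrite logn_coprime ?prime_coprime.
by rewrite lognM // logn_h1 addn0 ltnn.
Qed.

Lemma unitzE (x : int) : (x \is a GRing.unit) = (`|x|%N == 1%N).
Proof. by case: x => [[|[|n]]|[|n]]. Qed.

Lemma primitive_Zpoly_dvdz (f : {poly int}) (c : int) :
  primitive_Zpoly f -> (forall i, (c %| f`_i)%Z) -> c \is a GRing.unit.
Proof.
move=> prim c_dvd_f; rewrite unitzE -dvdz1.
have <- : \big[gcdz/0]_(i < size f) f`_i = 1%Z := prim.
apply: (big_ind (fun x => c %| x)%Z) => [|x y cx cy|i _].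
- exact: dvdz0.
- by rewrite dvdz_gcd cx.
- exact: c_dvd_f.
Qed.

Lemma primitive_Zpoly_const_factor (g h : {poly int}) :
  primitive_Zpoly (g * h) -> (size g <= 1)%N -> g \is a GRing.unit.
Proof.
move=> prim g_le1; rewrite [g]size1_polyC // in prim *.
have g0_unit : g`_0 \is a GRing.unit.
  by apply: (primitive_Zpoly_dvdz prim) => i; rewrite coefCM dvdz_mulr.
have g0_neq0 : g`_0 != 0 by apply: contraTneq g0_unit => ->; rewrite unitr0.
by rewrite poly_unitE size_polyC g0_neq0 coefC.
Qed.

Lemma nonunit_factor_coef0_gt (g h : {poly int}) (d : nat) : (0 < d)%N ->
  primitive_Zpoly (g * h) ->
  (forall theta : algC, root (map_poly intr (g * h)) theta -> d%:R < `|theta|) ->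
  g \isn't a GRing.unit -> (d < `|(g`_0)%R|)%N.
Proof.
move=> d_gt0 prim gt_roots g_nunit.
apply: coef0_gt_of_roots_gt d_gt0 _ _ => [|theta g_theta].
  by rewrite ltnNge; apply: contra g_nunit; apply: primitive_Zpoly_const_factor prim.
by apply: gt_roots; rewrite rmorphM rootM g_theta.
Qed.

Theorem theorem23 (f : {poly int}) (p k d : nat) :
  primitive_Zpoly f ->
  prime p -> (0 < k)%N -> (0 < d)%N -> odd k ->
  (f`_0 = (p ^ k * d)%:Z \/ f`_0 = - (p ^ k * d)%:Z) ->
  gcdz f`_0 f`_1 = (p ^ k)%:Z ->
  ~~ ((p%:Z %| f`_2 * d%:Z)%Z) ->
  (forall theta : algC, root (map_poly intr f) theta -> d%:R < `|theta|) ->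
  irreducible_in_Zx f.
Proof.
move=> prim p_pr k_gt0 d_gt0 k_odd f0_eq gcd_f01 p_ndvd_f2d gt_roots.
have /andP[p_ndvd_f2 p_ndvd_d] : ~~ (p%:Z %| f`_2)%Z && ~~ (p %| d)%N.
  by move: p_ndvd_f2d; rewrite dvdzE abszM /= Euclid_dvdM // negb_or.
have f0_abs : `|(f`_0)%R|%N = (p ^ k * d)%N by case: f0_eq => ->; rewrite ?abszN.
have pk_f1 : ((p ^ k)%:Z %| f`_1)%Z by rewrite -gcd_f01 dvdz_gcdr.
have pk_gt1 : (1 < p ^ k)%N by rewrite -(exp1n k) ltn_exp2r // prime_gt1.
have f0_nunit : f`_0 \isn't a GRing.unit.
  by rewrite unitzE f0_abs muln_eq1 (gtn_eqF pk_gt1).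
have f0_neq0 : f`_0 != 0.
  by rewrite -absz_gt0 f0_abs muln_gt0 d_gt0 (ltn_trans _ pk_gt1).
split; [by apply: contraNneq f0_neq0 => ->; rewrite coef0 | split].
  by rewrite poly_unitE (negbTE f0_nunit) andbF.
move=> g h f_gh; rewrite f_gh in prim f0_abs pk_f1 p_ndvd_f2 gt_roots.
have [g_unit|g_nunit] := boolP (g \is a GRing.unit); first by left.
have [h_unit|h_nunit] := boolP (h \is a GRing.unit); first by right.
exfalso; apply: (coef0_factors_not_both_gt p_pr k_odd d_gt0 p_ndvd_d f0_abs pk_f1 p_ndvd_f2).
- exact: nonunit_factor_coef0_gt d_gt0 prim gt_roots g_nunit.
- rewrite mulrC in prim gt_roots.
  exact: nonunit_factor_coef0_gt d_gt0 prim gt_roots h_nunit.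
Qed.
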